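(* Let $n$ be a positive integer, $\sigma\in(0,1]$ with $\sigma n$ an integer, and let $S\subseteq[n]$ with $|S|=\sigma n$. Let $\alpha>0$ be such that $k=\alpha/\sigma$ is a positive integer. Construct $(X_1,Z_1,\dots,Z_k)$ as follows: draw $Y_1,\dots,Y_k$ independently and uniformly from $[n]$; for each $i$ with $Y_i\notin S$ set $Z_i=Y_i$; for each $i$ with $Y_i\in S$ draw $\tilde W_i$ uniformly from $S$ (independently of everything else) and set $Z_i=\tilde W_i$; if there is at least one $i$ with $Y_i\in S$, let $X_1$ be chosen uniformly at random from the set of drawn values $\{\tilde W_i\}$, and otherwise draw $X_1$ uniformly from $S$ independently. Then: (a) $X_1$ is uniformly distributed on $S$; (b) each $Z_i$ is uniformly distributed on $[n]$; (c) $Z_1,\dots,Z_k$ are independent; (d) with probability $1-(1-\sigma)^{\alpha/\sigma}$, $X_1\in\{Z_1,\dots,Z_k\}$. *)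

From mathcomp Require Import all_boot all_order all_algebra.
Unset Printing Implicit Defensive.
Import Order.TTheory GRing.Theory Num.Theory.
Local Open Scope ring_scope.

(* A sample point records
   - y : the draws Y_1..Y_k (uniform on [n], independent),
   - w : auxiliary draws W~_1..W~_k (uniform on S, independent); W~_i is only
         used when Y_i \in S (drawing it for all i changes nothing),
   - x : the value X_1. *)
Definition outcome (n k : nat) :=
  ({ffun 'I_k -> 'I_n} * {ffun 'I_k -> 'I_n} * 'I_n)%type.

Section Constr.
Variables (R : realFieldType) (n k : nat) (S : {set 'I_n}).

Definition drawn (y w : {ffun 'I_k -> 'I_n}) : {set 'I_n} :=
  [set w i | i in [set i | y i \in S]].

(* conditional probability of X_1 = x given (Y, W~) *)
Definition xweight (y w : {ffun 'I_k -> 'I_n}) (x : 'I_n) : R :=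
  let D := drawn y w in
  if D != set0 then (x \in D)%:R / #|D|%:R else (x \in S)%:R / #|S|%:R.

Definition weight (o : outcome n k) : R :=
  let: (y, w, x) := o in
  (n%:R^-1) ^+ k * (\prod_i ((w i \in S)%:R / #|S|%:R)) * xweight y w x.

Definition Pr (E : pred (outcome n k)) : R := \sum_(o | E o) weight o.

Definition X1 {n k : nat} (o : outcome n k) : 'I_n := o.2.
Definition Z (o : outcome n k) (i : 'I_k) : 'I_n :=
  if o.1.1 i \in S then o.1.2 i else o.1.1 i.
End Constr.

From mathcomp Require Import all_boot all_order all_algebra.
From mathcomp Require Import perm.
Import Order.TTheory GRing.Theory Num.Theory.
Local Open Scope ring_scope.

(* The law of (Y, W~) is the product over the k coordinates of the law of
   (Y_i, W~_i), and Z_i depends on (Y_i, W~_i) only, with uniform law on [n]: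
   this gives (b) and (c).  Applying a transposition of two points of S to all
   the W~_i preserves the law of (Y, W~) and transports the conditional law of
   X_1, so X_1 is uniform on S, which is (a).  Finally X_1 is one of the Z_i
   exactly when some Y_i falls in S (if none does, X_1 lies in S whereas every
   Z_i = Y_i lies outside S), an event of probability 1 - (1 - |S|/n)^k. *)

Lemma sum_mem_natr (R : pzSemiRingType) (T : finType) (A : {pred T}) :
  \sum_(x : T) ((x \in A)%:R : R) = #|A|%:R.
Proof.
by rewrite -sum1_card natr_sum [RHS]big_mkcond; apply: eq_bigr => x _; case: (x \in A).
Qed.

Lemma natr_forall (R : comPzSemiRingType) (I : finType) (b : pred I) :
  ([forall i, b i]%:R : R) = \prod_i (b i)%:R.
Proof.
have [/forallP b_all | /forallPn [j bNj]] := boolP [forall i, b i].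
  by rewrite big1 // => i _; rewrite b_all.
by rewrite (bigD1 j) //= (negbTE bNj) mul0r.
Qed.

Lemma sum_ffun2_prod (R : comPzSemiRingType) (I A B : finType)
    (f : I -> A -> B -> R) :
  \sum_(y : {ffun I -> A}) \sum_(w : {ffun I -> B}) \prod_i f i (y i) (w i)
  = \prod_i \sum_a \sum_b f i a b.
Proof.
by rewrite bigA_distr_bigA; apply: eq_bigr => y _; rewrite bigA_distr_bigA.
Qed.

Section Coupling.
Variables (R : realFieldType) (n k : nat) (S : {set 'I_n}).
Hypothesis S_gt0 : (0 < #|S|)%N.

Local Notation Pr := (Pr R n k S).
Local Notation weight := (weight R n k S).
Local Notation xweight := (xweight R n k S).
Local Notation drawn := (drawn n k S).
Local Notation Z := (Z n k S).

Lemma n_gt0 : (0 < n)%N.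
Proof. by apply: leq_trans S_gt0 _; rewrite -[leqRHS]card_ord max_card. Qed.

Lemma natr_card_S_neq0 : #|S|%:R != 0 :> R.
Proof. by rewrite pnatr_eq0 -lt0n. Qed.

Lemma natr_n_neq0 : n%:R != 0 :> R.
Proof. by rewrite pnatr_eq0 -lt0n n_gt0. Qed.

Definition coord_mass (a b : 'I_n) : R := n%:R^-1 * ((b \in S)%:R / #|S|%:R).

Lemma sum_unif_S : \sum_b ((b \in S)%:R / #|S|%:R : R) = 1.
Proof. by rewrite -mulr_suml sum_mem_natr mulfV ?natr_card_S_neq0. Qed.

Lemma sum_coord_mass a : \sum_b coord_mass a b = n%:R^-1.
Proof. by rewrite -mulr_sumr sum_unif_S mulr1. Qed.

Lemma sum2_coord_mass : \sum_a \sum_b coord_mass a b = 1.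
Proof.
under eq_bigr do rewrite sum_coord_mass.
by rewrite sumr_const card_ord -[_ *+ n]mulr_natl mulfV ?natr_n_neq0.
Qed.

Lemma weightE y w x :
  weight (y, w, x) = \prod_i coord_mass (y i) (w i) * xweight y w x.
Proof. by rewrite /coord_mass big_split /= prodr_const card_ord. Qed.

Lemma sum_xweight y w : \sum_x xweight y w x = 1.
Proof.
rewrite /xweight /=; have [D_neq0 | _] := boolP (drawn y w != set0).
  by rewrite -mulr_suml sum_mem_natr mulfV // pnatr_eq0 -lt0n card_gt0.
by rewrite -mulr_suml sum_mem_natr mulfV ?natr_card_S_neq0.
Qed.

Lemma PrE (E : pred (outcome n k)) :
  Pr E = \sum_y \sum_w \sum_x (E (y, w, x))%:R * weight (y, w, x).
Proof.
rewrite /Pr big_mkcond /= pair_big pair_big /=.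
by apply: eq_bigr => [[[y w] x]] _ /=; case: (E _); rewrite ?mul1r ?mul0r.
Qed.

Lemma eq_Pr_support (E E' : pred (outcome n k)) :
  (forall o, weight o != 0 -> E o = E' o) -> Pr E = Pr E'.
Proof.
move=> EE'; rewrite /Pr big_mkcond [RHS]big_mkcond; apply: eq_bigr => o _.
by have [-> | /EE' ->] := eqVneq (weight o) 0; rewrite ?if_same.
Qed.

Lemma PrC (E : pred (outcome n k)) : Pr E = Pr predT - Pr (predC E).
Proof. by rewrite /Pr [X in _ = X - _](bigID E) /= addrK; apply: eq_bigl. Qed.

Lemma Pr_coordwise (E : pred (outcome n k)) (Q : 'I_k -> 'I_n -> 'I_n -> bool) :
    (forall y w x, E (y, w, x) = [forall i, Q i (y i) (w i)]) ->
  Pr E = \prod_i \sum_a \sum_b (Q i a b)%:R * coord_mass a b.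
Proof.
move=> EQ; rewrite PrE -sum_ffun2_prod; apply: eq_bigr => y _; apply: eq_bigr => w _.
under [LHS]eq_bigr => x _ do rewrite (EQ y w x) natr_forall weightE mulrA -big_split.
by rewrite -mulr_sumr sum_xweight mulr1.
Qed.

Lemma Pr_predT : Pr predT = 1.
Proof.
rewrite (@Pr_coordwise _ (fun _ _ _ => true)); last by move=> *; apply/esym/forallP.
apply: big1 => i _.
by under eq_bigr do under eq_bigr do rewrite mul1r; apply: sum2_coord_mass.
Qed.

Lemma coord_Z_mass_row a z :
  \sum_b ((if a \in S then b else a) == z)%:R * coord_mass a b
  = n%:R^-1 * (if a \in S then (z \in S)%:R / #|S|%:R else (a == z)%:R).
Proof.
case: ifP => _; last by rewrite -mulr_sumr sum_coord_mass mulrC.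
by rewrite (bigD1 z) //= eqxx mul1r big1 ?addr0 // => b /negbTE ->; rewrite mul0r.
Qed.

Lemma coord_Z_mass z :
  \sum_a \sum_b ((if a \in S then b else a) == z)%:R * coord_mass a b = n%:R^-1.
Proof.
rewrite (eq_bigr _ (fun a _ => coord_Z_mass_row a z)) -mulr_sumr -[RHS]mulr1.
congr (_ * _); have [zS | zNS] := boolP (z \in S).
  rewrite -[RHS]sum_unif_S; apply: eq_bigr => a _.
  case: ifPn => [// | aNS].
  have /negbTE -> : a != z by apply: contraNneq aNS => ->.
  by rewrite mul0r.
rewrite (bigD1 z) //= eqxx (negbTE zNS) big1 ?addr0 // => a /negbTE aNz.
by rewrite aNz mul0r; case: ifP.
Qed.

Lemma Pr_Z i z : Pr [pred o | Z o i == z] = n%:R^-1.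
Proof.
rewrite (@Pr_coordwise _ (fun j a b => (j == i) ==> ((if a \in S then b else a) == z))).
  rewrite (bigD1 i) //= eqxx coord_Z_mass big1 ?mulr1 // => j /negbTE ->.
  by under eq_bigr do under eq_bigr do rewrite mul1r; apply: sum2_coord_mass.
move=> y w x; rewrite /Z /=; apply/idP/forallP => [Zz j | /(_ i)]; last by rewrite eqxx.
by case: eqP => [-> | ].
Qed.

Lemma Pr_Z_indep (z : {ffun 'I_k -> 'I_n}) :
  Pr [pred o | [forall i, Z o i == z i]] = \prod_i Pr [pred o | Z o i == z i].
Proof.
rewrite (@Pr_coordwise _ (fun j a b => (if a \in S then b else a) == z j)) //.
by apply: eq_bigr => i _; rewrite coord_Z_mass Pr_Z.
Qed.

Definition X1_mass (x : 'I_n) : R := \sum_y \sum_w weight (y, w, x).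

Lemma Pr_X1 x : Pr [pred o | X1 o == x] = X1_mass x.
Proof.
rewrite PrE; apply: eq_bigr => y _; apply: eq_bigr => w _.
rewrite (bigD1 x) //= eqxx mul1r [X in _ + X]big1 ?addr0 // => x' /negbTE x'x.
by rewrite /X1 /= x'x mul0r.
Qed.

Lemma sum_X1_mass : \sum_x X1_mass x = 1.
Proof.
rewrite -Pr_predT PrE exchange_big; apply: eq_bigr => y _ /=.
by rewrite exchange_big; apply: eq_bigr => w _; apply: eq_bigr => x _; rewrite mul1r.
Qed.

Lemma X1_mass_notin x : x \notin S -> X1_mass x = 0.
Proof.
move=> xNS; apply: big1 => y _; apply: big1 => w _; rewrite weightE.
have [/forallP wS | /forallPn [i wNS]] := boolP [forall i, w i \in S]; last first.
  by rewrite (bigD1 i) //= /coord_mass (negbTE wNS) !(mul0r, mulr0).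
have /negbTE xNdrawn : x \notin drawn y w.
  by apply/imsetP => -[j _ xwj]; move: xNS; rewrite xwj wS.
by rewrite /xweight /= xNdrawn (negbTE xNS); case: ifP; rewrite !mul0r mulr0.
Qed.

Lemma X1_mass_tperm x x' : x \in S -> x' \in S -> X1_mass x = X1_mass x'.
Proof.
move=> xS x'S; pose pi := tperm x x'.
pose relabel (w : {ffun 'I_k -> 'I_n}) := [ffun i => pi (w i)].
have relabelK : involutive relabel by move=> w; apply/ffunP => i; rewrite !ffunE tpermK.
have piS a : (pi a \in S) = (a \in S).
  by rewrite /pi; case: tpermP => [->|->|//]; rewrite xS x'S.
apply: eq_bigr => y _; rewrite [RHS](reindex_inj (inv_inj relabelK)).
apply: eq_bigr => w _; rewrite !weightE; congr (_ * _).
  by apply: eq_bigr => i _; rewrite /coord_mass ffunE piS.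
have drawn_relabel : drawn y (relabel w) = pi @: drawn y w.
  by rewrite /drawn -imset_comp; apply: eq_imset => i /=; rewrite ffunE.
rewrite /xweight /= drawn_relabel.
rewrite [in RHS]imset_eq0 [in RHS]card_imset; last exact: perm_inj.
by rewrite -{1}(tpermL x x') mem_imset ?xS ?x'S //; apply: perm_inj.
Qed.

Lemma Pr_X1_unif x :
  Pr [pred o | X1 o == x] = if x \in S then #|S|%:R^-1 else 0.
Proof.
rewrite Pr_X1; case: ifPn => [xS | /X1_mass_notin //].
have : \sum_x' (x' \in S)%:R * X1_mass x = 1.
  rewrite -[RHS]sum_X1_mass; apply: eq_bigr => x' _.
  have [x'S | x'NS] := boolP (x' \in S); last by rewrite mul0r X1_mass_notin.
  by rewrite mul1r (X1_mass_tperm _ _ xS x'S).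
rewrite -mulr_suml sum_mem_natr => /(congr1 (fun t => #|S|%:R^-1 * t)).
by rewrite mulr1 mulKf ?natr_card_S_neq0.
Qed.

Lemma Pr_Y_notin_S :
  Pr [pred o : outcome n k | [forall i, o.1.1 i \notin S]] = (1 - #|S|%:R / n%:R) ^+ k.
Proof.
rewrite (@Pr_coordwise _ (fun _ a _ => a \notin S)) //.
rewrite -[in RHS](card_ord k) -prodr_const; apply: eq_bigr => i _.
under eq_bigr do rewrite -mulr_sumr sum_coord_mass.
rewrite -mulr_suml (eq_bigr (fun a => (a \in ~: S)%:R)) => [|a _]; last by rewrite in_setC.
rewrite sum_mem_natr [#|~: S|]cardsCs setCK natrB ?max_card // card_ord.
by rewrite mulrBl mulfV ?natr_n_neq0.
Qed.

Lemma xweight_neq0 y w x : xweight y w x != 0 ->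
  if drawn y w != set0 then x \in drawn y w else x \in S.
Proof.
by rewrite /xweight /=; case: ifP => _; case: (x \in _) => //; rewrite mul0r eqxx.
Qed.

Lemma X1_in_Z_on_support (o : outcome n k) : weight o != 0 ->
  [exists i, X1 o == Z o i] = [exists i, o.1.1 i \in S].
Proof.
case: o => [[y w] x]; rewrite weightE mulf_eq0 negb_or => /andP [_ /xweight_neq0].
rewrite /X1 /Z /=; have [/existsP [i yiS] | /existsPn yNS] := boolP [exists i, y i \in S].
  have -> : drawn y w != set0 by apply/set0Pn; exists (w i); apply: imset_f; rewrite inE.
  by case/imsetP => j; rewrite inE => yjS ->; apply/existsP; exists j; rewrite yjS.
have -> : drawn y w = set0.
  by apply/eqP; rewrite imset_eq0; apply/eqP/setP => i; rewrite !inE (negbTE (yNS i)).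
rewrite eqxx => xS; apply/existsPn => i; rewrite (negbTE (yNS i)).
by apply: contraTneq xS => ->; apply: yNS.
Qed.

Lemma Pr_X1_in_Z :
  Pr [pred o | [exists i, X1 o == Z o i]] = 1 - (1 - #|S|%:R / n%:R) ^+ k.
Proof.
rewrite (@eq_Pr_support _ [pred o : outcome n k | [exists i, o.1.1 i \in S]]); last first.
  by move=> o /X1_in_Z_on_support.
rewrite PrC Pr_predT -Pr_Y_notin_S; congr (_ - _); apply: eq_Pr_support => o _.
by rewrite /= negb_exists.
Qed.

End Coupling.

Theorem mainTheorem2 (R : realFieldType) (n k : nat) (sigma alpha : R)
  (S : {set 'I_n}) :
  (0 < n)%N -> 0 < sigma -> sigma <= 1 ->
  (#|S|)%:R = sigma * n%:R ->
  0 < alpha -> (0 < k)%N -> alpha / sigma = k%:R ->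
  (* (a) X_1 uniform on S *)
  (forall x : 'I_n,
     Pr R n k S [pred o | X1 o == x] = if x \in S then (#|S|%:R)^-1 else 0) /\
  (* (b) each Z_i uniform on [n] *)
  (forall (i : 'I_k) (z : 'I_n), Pr R n k S [pred o | Z n k S o i == z] = (n%:R)^-1) /\
  (* (c) Z_1..Z_k mutually independent *)
  (forall z : {ffun 'I_k -> 'I_n},
     Pr R n k S [pred o | [forall i, Z n k S o i == z i]]
     = \prod_(i < k) Pr R n k S [pred o | Z n k S o i == z i]) /\
  (* (d) *)
  Pr R n k S [pred o | [exists i, X1 o == Z n k S o i]] = 1 - (1 - sigma) ^+ k.
Proof.
move=> n_gt0 sigma_gt0 _ card_S _ _ _.
have S_gt0 : (0 < #|S|)%N by rewrite -(ltr0n R) card_S mulr_gt0 ?ltr0n.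
split; first exact: Pr_X1_unif.
split; first exact: Pr_Z.
split; first exact: Pr_Z_indep.
by rewrite Pr_X1_in_Z // card_S mulfK // pnatr_eq0 -lt0n.
Qed.
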